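(* Every solution $(x(t),y(t))$ of the system (FHN-CNN) with initial state $(x^0,y^0)\in H$ satisfies, for all $t\ge 0$, $$\sum_{i=1}^n\big(|x_i(t)|^2+|y_i(t)|^2\big)\le\frac{1}{\min\{C_1,1\}}\Big[e^{-\delta t}\sum_{i=1}^n\big(C_1|x_i^0|^2+|y_i^0|^2\big)+\frac{n}{\delta}\Big(C_2+\frac{\delta\beta}{b}\Big)\Big],$$ where $C_1=\frac{\delta}{2b}$ and $C_2=\frac{b}{4\delta\lambda}\Big(\frac{\delta^2}{2b}+\frac{\delta}{2}+\frac{2c^2}{\delta}\Big)^2$.
   Context: Fix an integer $n\ge 4$ and positive constants $a,b,c,\delta,p$. Let $f\in C^1(\mathbb{R},\mathbb{R})$ satisfy, for some positive constants $\lambda,\beta,\gamma$: $f(s)s\le -\lambda s^4+\beta$ and $f'(s)\le\gamma$ for all $s\in\mathbb{R}$. The FitzHugh–Nagumo cellular neural network with boundary feedback (FHN-CNN) is the ODE system for $t>0$, $1\le i\le n$: $$\frac{dx_i}{dt}=a(x_{i-1}-2x_i+x_{i+1})+f(x_i)-by_i+pu_i,\qquad \frac{dy_i}{dt}=cx_i-\delta y_i,$$ with the periodic convention $x_0=x_n$, $x_{n+1}=x_1$, and the boundary feedback $u_1=u_{n+1}=x_n-x_1$, $u_i=0$ for $2\le i\le n-1$, $u_n=u_0=x_1-x_n$. The state space is $H=\mathbb{R}^{2n}$ with norm $\|(x,y)\|^2=\sum_{i=1}^n(|x_i|^2+|y_i|^2)$; initial data $x_i(0)=x_i^0$, $y_i(0)=y_i^0$.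 *)

From Stdlib Require Import Reals Lra Lia.
From Coquelicot Require Import Coquelicot.
Open Scope R_scope.

(* States are indexed by i in {1,...,n}; a trajectory is x : nat -> R -> R,
   x i t = x_i(t). Periodic convention x_0 = x_n, x_{n+1} = x_1. *)
Definition xprev (n : nat) (x : nat -> R) (i : nat) : R :=
  if Nat.eqb i 1 then x n else x (i - 1)%nat.
Definition xnext (n : nat) (x : nat -> R) (i : nat) : R :=
  if Nat.eqb i n then x 1%nat else x (i + 1)%nat.

Definition ufb (n : nat) (x : nat -> R) (i : nat) : R :=
  if Nat.eqb i 1 then x n - x 1%nat
  else if Nat.eqb i n then x 1%nat - x n else 0.

Definition fhn_rhs_x (n : nat) (a b p : R) (f : R -> R)
  (x y : nat -> R) (i : nat) : R :=
  a * (xprev n x i - 2 * x i + xnext n x i) + f (x i) - b * y i + p * ufb n x i.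

Definition is_FHN_solution (n : nat) (a b c delta p : R) (f : R -> R)
  (x0 y0 : nat -> R) (x y : nat -> R -> R) : Prop :=
  (forall i, (1 <= i <= n)%nat ->
     x i 0 = x0 i /\ y i 0 = y0 i /\
     filterlim (x i) (at_right 0) (locally (x i 0)) /\
     filterlim (y i) (at_right 0) (locally (y i 0))) /\
  (forall t, 0 < t -> forall i, (1 <= i <= n)%nat ->
     is_derive (x i) t (fhn_rhs_x n a b p f (fun j => x j t) (fun j => y j t) i) /\
     is_derive (y i) t (c * x i t - delta * y i t)).

From Stdlib Require Import Reals Lra Lia.
From Coquelicot Require Import Coquelicot.
Open Scope R_scope.

(* For C1 = delta/(2b) consider
   the weighted energy  E = sum_i (C1 x_i^2 + y_i^2).  Along a solution,
     E' + delta E <= n (C2 + delta beta / b),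
   because (i) the discrete periodic Laplacian and the boundary feedback are
   nonpositive in the x-inner product, (ii) the choice of C1 cancels the
   coupling terms -b x_i y_i and c x_i y_i up to a quadratic remainder, and
   (iii) the quartic dissipation -lambda x^4 of f absorbs that remainder by
   Young's inequality, each site contributing at most C2 + delta beta / b.
   A linear Gronwall lemma (proved from the mean value theorem and
   right-continuity at t = 0) then gives
     E(t) <= e^{-delta t} E(0) + n (C2 + delta beta / b) / delta,
   and the theorem follows since E dominates min(C1,1) times the squared norm. *)

Lemma sumR_plus (u v : nat -> R) m k :
  @eq R (sum_n_m (fun i => u i + v i) m k) (sum_n_m u m k + sum_n_m v m k).
Proof. exact (sum_n_m_plus u v m k). Qed.

Lemma sumR_scal (c : R) (u : nat -> R) m k :
  @eq R (sum_n_m (fun i => c * u i) m k) (c * sum_n_m u m k).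
Proof. exact (sum_n_m_mult_l c u m k). Qed.

Lemma sumR_minus (u v : nat -> R) m k :
  @eq R (sum_n_m (fun i => u i - v i) m k) (sum_n_m u m k - sum_n_m v m k).
Proof.
  replace (sum_n_m (fun i => u i - v i) m k)
    with (sum_n_m (fun i => u i + (-1) * v i) m k).
  2:{ apply sum_n_m_ext_loc; intros; simpl; ring. }
  rewrite sumR_plus, sumR_scal. ring.
Qed.

Lemma sumR_Sm (u : nat -> R) m k : (m <= S k)%nat ->
  @eq R (sum_n_m u m (S k)) (sum_n_m u m k + u (S k)).
Proof. intros; now rewrite sum_n_Sm. Qed.

Lemma sumR_Sn (u : nat -> R) m k : (m <= k)%nat ->
  @eq R (sum_n_m u m k) (u m + sum_n_m u (S m) k).
Proof. intros; now rewrite sum_Sn_m. Qed.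

Lemma is_derive_sum (g : nat -> R -> R) (dg : nat -> R) t n :
  (forall i, (1 <= i <= n)%nat -> is_derive (g i) t (dg i)) ->
  is_derive (fun s => sum_n_m (fun i => g i s) 1 n) t (sum_n_m dg 1 n).
Proof.
  induction n as [|n IH]; intros Hg.
  - rewrite sum_n_m_zero by lia.
    apply (is_derive_ext (fun _ => 0)).
    + intros s; rewrite sum_n_m_zero by lia; reflexivity.
    + apply (@is_derive_const R_AbsRing R_NormedModule).
  - rewrite sumR_Sm by lia.
    apply (is_derive_ext (fun s => sum_n_m (fun i => g i s) 1 n + g (S n) s)).
    + intros s; rewrite sumR_Sm by lia; reflexivity.
    + apply (is_derive_plus (fun s => sum_n_m (fun i => g i s) 1 n) (g (S n)));
        [apply IH; intros i Hi|]; apply Hg; lia.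
Qed.

Section FilterLimits.
Context {T : Type} {F : (T -> Prop) -> Prop} {FF : Filter F}.

Lemma filterlim_Rplus (u v : T -> R) lu lv :
  filterlim u F (locally lu) -> filterlim v F (locally lv) ->
  filterlim (fun s => u s + v s) F (locally (lu + lv)).
Proof. intros Hu Hv. exact (filterlim_comp_2 u v Rplus Hu Hv (filterlim_plus lu lv)). Qed.

Lemma filterlim_Rmult (u v : T -> R) lu lv :
  filterlim u F (locally lu) -> filterlim v F (locally lv) ->
  filterlim (fun s => u s * v s) F (locally (lu * lv)).
Proof. intros Hu Hv. exact (filterlim_comp_2 u v Rmult Hu Hv (filterlim_mult lu lv)). Qed.

Lemma filterlim_sum (g : nat -> T -> R) (l : nat -> R) n :
  (forall i, (1 <= i <= n)%nat -> filterlim (g i) F (locally (l i))) ->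
  filterlim (fun s => sum_n_m (fun i => g i s) 1 n) F (locally (sum_n_m l 1 n)).
Proof.
  induction n as [|n IH]; intros Hg.
  - rewrite sum_n_m_zero by lia.
    apply (filterlim_ext (fun _ => zero)).
    + intros s; rewrite sum_n_m_zero by lia; reflexivity.
    + apply filterlim_const.
  - rewrite sumR_Sm by lia.
    apply (filterlim_ext (fun s => sum_n_m (fun i => g i s) 1 n + g (S n) s)).
    + intros s; rewrite sumR_Sm by lia; reflexivity.
    + apply filterlim_Rplus; [apply IH; intros i Hi|]; apply Hg; lia.
Qed.
End FilterLimits.

Lemma nonincreasing_of_derive (W dW : R -> R) :
  (forall s, 0 < s -> is_derive W s (dW s)) ->
  (forall s, 0 < s -> dW s <= 0) ->
  forall s u, 0 < s -> s <= u -> W u <= W s.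
Proof.
  intros HW Hneg s u Hs Hsu.
  destruct (Rle_lt_or_eq_dec s u Hsu) as [Hlt | <-]; [|apply Rle_refl].
  destruct (MVT_gen W s u dW) as [z [Hz Hmvt]];
    rewrite ?Rmin_left, ?Rmax_right in * by lra.
  - intros z Hz; apply HW; lra.
  - intros z Hz. apply continuity_pt_filterlim, (@ex_derive_continuous R_AbsRing R_NormedModule).
    exists (dW z); apply HW; lra.
  - assert (dW z <= 0) by (apply Hneg; lra). nra.
Qed.

Lemma nonincreasing_at_origin (W : R -> R) :
  (forall s u, 0 < s -> s <= u -> W u <= W s) ->
  filterlim W (at_right 0) (locally (W 0)) ->
  forall t, 0 <= t -> W t <= W 0.
Proof.
  intros Hmono Hlim t Ht.
  destruct (Rle_lt_or_eq_dec 0 t Ht) as [Htpos | <-]; [|apply Rle_refl].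
  apply (filterlim_le (F := at_right 0) (fun _ => W t) W (W t) (W 0)).
  - exists (mkposreal t Htpos); intros s Hball Hspos. apply Hmono; [exact Hspos|].
    change (Rabs (s - 0) < t) in Hball. rewrite Rminus_0_r, Rabs_pos_eq in Hball; lra.
  - apply filterlim_const.
  - exact Hlim.
Qed.

Lemma gronwall_linear (S D : R -> R) (d M : R) :
  0 < d ->
  (forall s, 0 < s -> is_derive S s (D s)) ->
  (forall s, 0 < s -> D s + d * S s <= M) ->
  filterlim S (at_right 0) (locally (S 0)) ->
  forall t, 0 <= t -> S t <= exp (- d * t) * (S 0 - M / d) + M / d.
Proof.
  intros Hd HS Hineq Hlim t Ht.
  set (W := fun s => exp (d * s) * (S s - M / d)).
  assert (HWderive : forall s, 0 < s ->
            is_derive W s (exp (d * s) * (D s + d * S s - M))).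
  { intros s Hs. unfold W.
    assert (Hexp : is_derive (fun s => exp (d * s)) s (d * exp (d * s))).
    { auto_derive; [exact I | ring]. }
    assert (Hdiff := is_derive_minus _ _ _ _ _ (HS s Hs)
                       (@is_derive_const R_AbsRing R_NormedModule (M / d) s)).
    assert (Hprod := is_derive_mult _ _ _ _ _ Hexp Hdiff Rmult_comm).
    match type of Hprod with is_derive _ _ ?l => replace (exp (d * s) * _) with l end;
      [exact Hprod|].
    unfold minus, opp, zero, plus, mult; simpl. field. lra. }
  assert (HWlim : filterlim W (at_right 0) (locally (W 0))).
  { apply filterlim_Rmult.
    - apply (filterlim_filter_le_1 (F := locally 0)); [apply filter_le_within|].
      apply (ex_derive_continuous (fun s => exp (d * s))). auto_derive. exact I.
    - apply filterlim_Rplus; [exact Hlim | apply filterlim_const]. }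
  assert (HWt : W t <= W 0).
  { apply (nonincreasing_at_origin W); [|exact HWlim|exact Ht].
    apply (nonincreasing_of_derive W _ HWderive).
    intros s Hs. specialize (Hineq s Hs).
    assert (0 < exp (d * s)) by apply exp_pos. nra. }
  unfold W in HWt. rewrite Rmult_0_r, exp_0, Rmult_1_l in HWt.
  assert (Hinv : exp (- d * t) * exp (d * t) = 1).
  { rewrite <- exp_plus. replace (- d * t + d * t) with 0 by ring. apply exp_0. }
  assert (Hpos : 0 < exp (- d * t)) by apply exp_pos.
  apply (Rmult_le_compat_l (exp (- d * t))) in HWt; [|lra].
  rewrite <- Rmult_assoc, Hinv, Rmult_1_l in HWt. lra.
Qed.

Lemma young_quartic (K A x : R) : 0 < A -> K * x ^ 2 - A * x ^ 4 <= K ^ 2 / (4 * A).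
Proof.
  intros HA.
  assert (Hsq : 4 * A * (K ^ 2 / (4 * A) - (K * x ^ 2 - A * x ^ 4)) = (K - 2 * A * x ^ 2) ^ 2)
    by (field; lra).
  assert (0 <= (K - 2 * A * x ^ 2) ^ 2) by apply pow2_ge_0. nra.
Qed.

(* The coupling terms are reduced to a multiple of x^2,
   which the quartic dissipation of f absorbs. *)
Lemma site_rate_bound (b c d l be x y fx : R) :
  0 < b -> 0 < c -> 0 < d -> 0 < l ->
  fx * x <= - l * x ^ 4 + be ->
  (d / (2 * b)) * (2 * x * fx) + (d / (2 * b)) * (2 * x * (- b * y))
    + 2 * y * (c * x - d * y) + d * ((d / (2 * b)) * (x * x) + y * y)
  <= b / (4 * d * l) * (d ^ 2 / (2 * b) + d / 2 + 2 * c ^ 2 / d) ^ 2 + d * be / b.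
Proof.
  intros Hb Hc Hd Hl Hf.
  set (K := d ^ 2 / (2 * b) + d / 2 + 2 * c ^ 2 / d).
  set (A := d * l / b).
  assert (HA : 0 < A) by (unfold A; apply Rdiv_lt_0_compat; nra).
  assert (Hreaction : (d / (2 * b)) * (2 * x * fx) <= - A * x ^ 4 + d * be / b).
  { replace ((d / (2 * b)) * (2 * x * fx)) with ((d / b) * (fx * x)) by (field; lra).
    replace (- A * x ^ 4 + d * be / b) with ((d / b) * (- l * x ^ 4 + be))
      by (unfold A; field; lra).
    apply Rmult_le_compat_l; [apply Rlt_le, Rdiv_lt_0_compat|]; lra. }
  assert (Hcoupling : (2 * c - d) * x * y - d * y ^ 2 <= (d / 2 + 2 * c ^ 2 / d) * x ^ 2).
  { assert (Hsq : d * ((d / 2 + 2 * c ^ 2 / d) * x ^ 2 - ((2 * c - d) * x * y - d * y ^ 2))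
                  = (d * y - (2 * c - d) * x / 2) ^ 2 + ((d + 2 * c) * x) ^ 2 / 4)
      by (field; lra).
    assert (0 <= (d * y - (2 * c - d) * x / 2) ^ 2) by apply pow2_ge_0.
    assert (0 <= ((d + 2 * c) * x) ^ 2) by apply pow2_ge_0. nra. }
  assert (Hyoung := young_quartic K A x HA).
  replace (K ^ 2 / (4 * A)) with (b / (4 * d * l) * K ^ 2) in Hyoung
    by (unfold A; field; lra).
  replace ((d / (2 * b)) * (2 * x * (- b * y))) with (- d * x * y) by (field; lra).
  replace (d * ((d / (2 * b)) * (x * x) + y * y)) with (d ^ 2 / (2 * b) * x ^ 2 + d * y ^ 2)
    by (field; lra).
  assert (HK : K * x ^ 2 = d ^ 2 / (2 * b) * x ^ 2 + (d / 2 + 2 * c ^ 2 / d) * x ^ 2)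
    by (unfold K; ring).
  fold K. nra.
Qed.

(* Periodic shifts permute the indices 1..n, so they leave sums invariant. *)
Lemma sum_xnext (h : R -> R) (X : nat -> R) n : (2 <= n)%nat ->
  @eq R (sum_n_m (fun i => h (xnext n X i)) 1 n) (sum_n_m (fun i => h (X i)) 1 n).
Proof.
  intros Hn. destruct n as [|m]; [lia|].
  rewrite sumR_Sm by lia.
  unfold xnext at 2. rewrite Nat.eqb_refl.
  rewrite (sum_n_m_ext_loc _ (fun i => h (X (S i)))).
  2:{ intros k Hk. unfold xnext. destruct (Nat.eqb_spec k (S m)); [lia|].
      now rewrite Nat.add_1_r. }
  rewrite (sum_n_m_S (fun i => h (X i))).
  rewrite (sumR_Sn (fun i => h (X i)) 1 (S m)) by lia. simpl. ring.
Qed.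

Lemma sum_xprev (h : R -> R) (X : nat -> R) n : (2 <= n)%nat ->
  @eq R (sum_n_m (fun i => h (xprev n X i)) 1 n) (sum_n_m (fun i => h (X i)) 1 n).
Proof.
  intros Hn. destruct n as [|m]; [lia|].
  rewrite sumR_Sn by lia.
  unfold xprev at 1. simpl Nat.eqb.
  rewrite <- (sum_n_m_S (fun i => h (xprev (S m) X i))).
  rewrite (sum_n_m_ext_loc _ (fun i => h (X i)) 1 m).
  2:{ intros k Hk. unfold xprev. destruct (Nat.eqb_spec (S k) 1); [lia|].
      f_equal; f_equal; lia. }
  rewrite (sumR_Sm (fun i => h (X i)) 1 m) by lia. ring.
Qed.

Lemma laplacian_nonpos (X : nat -> R) n : (2 <= n)%nat ->
  sum_n_m (fun i => X i * (xprev n X i - 2 * X i + xnext n X i)) 1 n <= 0.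
Proof.
  intros Hn.
  apply Rle_trans with (sum_n_m (fun i => (/ 2) * ((xprev n X i) ^ 2 - (X i) ^ 2)
                                       + (/ 2) * ((xnext n X i) ^ 2 - (X i) ^ 2)) 1 n).
  { apply sum_n_m_le. intros k.
    assert (0 <= (X k - xprev n X k) ^ 2) by apply pow2_ge_0.
    assert (0 <= (X k - xnext n X k) ^ 2) by apply pow2_ge_0. nra. }
  rewrite sumR_plus, !sumR_scal, !sumR_minus.
  rewrite (sum_xprev (fun v => v ^ 2)), (sum_xnext (fun v => v ^ 2)) by lia. lra.
Qed.

(* The boundary feedback is dissipative: sum_i x_i u_i = -(x_n - x_1)^2 <= 0. *)
Lemma feedback_nonpos (X : nat -> R) n : (2 <= n)%nat ->
  sum_n_m (fun i => X i * ufb n X i) 1 n <= 0.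
Proof.
  intros Hn. destruct n as [|m]; [lia|].
  rewrite sumR_Sn, sumR_Sm by lia.
  rewrite (sum_n_m_ext_loc _ (fun _ => 0)).
  2:{ intros k Hk. unfold ufb. destruct (Nat.eqb_spec k 1); [lia|].
      destruct (Nat.eqb_spec k (S m)); [lia|]. apply Rmult_0_r. }
  rewrite sum_n_m_const. unfold ufb. simpl Nat.eqb. rewrite Nat.eqb_refl.
  destruct (Nat.eqb_spec (S m) 1), (Nat.eqb_spec m 0); try lia.
  rewrite Rmult_0_r.
  assert (0 <= (X (S m) - X 1%nat) ^ 2) by apply pow2_ge_0. nra.
Qed.

Definition energy (n : nat) (C1 : R) (X Y : nat -> R) : R :=
  sum_n_m (fun i => C1 * (X i * X i) + Y i * Y i) 1 n.

Definition energy_rate (n : nat) (a b c delta p : R) (f : R -> R) (C1 : R)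
  (X Y : nat -> R) : R :=
  sum_n_m (fun i => C1 * (2 * X i * fhn_rhs_x n a b p f X Y i)
                    + 2 * Y i * (c * X i - delta * Y i)) 1 n.

(* Energy inequality E' + delta E <= n (C2 + delta beta / b) for C1 = delta/(2b):
   the Laplacian and feedback terms are dropped, each site uses site_rate_bound. *)
Lemma energy_rate_bound n (a b c d p l be : R) (f : R -> R) (X Y : nat -> R) :
  (2 <= n)%nat -> 0 < a -> 0 < b -> 0 < c -> 0 < d -> 0 < p -> 0 < l ->
  (forall s, f s * s <= - l * s ^ 4 + be) ->
  energy_rate n a b c d p f (d / (2 * b)) X Y + d * energy n (d / (2 * b)) X Y
  <= INR n * (b / (4 * d * l) * (d ^ 2 / (2 * b) + d / 2 + 2 * c ^ 2 / d) ^ 2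
              + d * be / b).
Proof.
  intros Hn Ha Hb Hc Hd Hp Hl Hf.
  set (K0 := b / (4 * d * l) * (d ^ 2 / (2 * b) + d / 2 + 2 * c ^ 2 / d) ^ 2 + d * be / b).
  set (C1 := d / (2 * b)).
  assert (HC1 : 0 < C1) by (unfold C1; apply Rdiv_lt_0_compat; lra).
  unfold energy_rate, energy. rewrite <- sumR_scal, <- sumR_plus.
  apply Rle_trans with (sum_n_m (fun i =>
     (2 * C1 * a) * (X i * (xprev n X i - 2 * X i + xnext n X i))
     + ((2 * C1 * p) * (X i * ufb n X i) + K0)) 1 n).
  { apply sum_n_m_le. intros k.
    assert (Hsite := site_rate_bound b c d l be (X k) (Y k) (f (X k)) Hb Hc Hd Hl (Hf (X k))).
    fold C1 K0 in Hsite. unfold fhn_rhs_x.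
    match goal with |- ?L <= ?R => assert (Hsplit : L - R =
      (C1 * (2 * X k * f (X k)) + C1 * (2 * X k * (- b * Y k))
       + 2 * Y k * (c * X k - d * Y k) + d * (C1 * (X k * X k) + Y k * Y k)) - K0)
      by ring end.
    lra. }
  rewrite !sumR_plus, !sumR_scal, sum_n_m_const.
  replace (S n - 1)%nat with n by lia.
  assert (HL := laplacian_nonpos X n Hn).
  assert (HU := feedback_nonpos X n Hn).
  assert (0 < 2 * C1 * a) by nra. assert (0 < 2 * C1 * p) by nra.
  nra.
Qed.

Lemma energy_dominates_norm n (C1 : R) (X Y : nat -> R) : 0 < C1 ->
  Rmin C1 1 * sum_n_m (fun i => (Rabs (X i)) ^ 2 + (Rabs (Y i)) ^ 2) 1 n
  <= energy n C1 X Y.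
Proof.
  intros HC1. unfold energy. rewrite <- sumR_scal. apply sum_n_m_le. intros k.
  rewrite !pow2_abs.
  assert (Rmin C1 1 <= C1) by apply Rmin_l. assert (Rmin C1 1 <= 1) by apply Rmin_r.
  assert (0 <= X k ^ 2) by apply pow2_ge_0. assert (0 <= Y k ^ 2) by apply pow2_ge_0.
  simpl. nra.
Qed.

Lemma is_derive_site_energy (u v : R -> R) (C s du dv : R) :
  is_derive u s du -> is_derive v s dv ->
  is_derive (fun s => C * (u s * u s) + v s * v s) s (C * (2 * u s * du) + 2 * v s * dv).
Proof.
  intros Hu Hv.
  assert (Hu2 := is_derive_mult u u s du du Hu Hu Rmult_comm).
  assert (Hv2 := is_derive_mult v v s dv dv Hv Hv Rmult_comm).
  assert (Hsum := is_derive_plus _ _ _ _ _ (is_derive_scal _ _ C _ Hu2) Hv2).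
  match type of Hsum with is_derive _ _ ?l => replace (C * _ + _) with l end;
    [exact Hsum|].
  unfold plus, mult; simpl. ring.
Qed.

Section Solution.
Variables (n : nat) (a b c delta p : R) (f : R -> R).
Variables (x0 y0 : nat -> R) (x y : nat -> R -> R).
Hypothesis Hsol : is_FHN_solution n a b c delta p f x0 y0 x y.

Let E (C1 s : R) : R := energy n C1 (fun j => x j s) (fun j => y j s).

Lemma solution_energy_derive (C1 : R) :
  forall s, 0 < s -> is_derive (E C1) s
    (energy_rate n a b c delta p f C1 (fun j => x j s) (fun j => y j s)).
Proof.
  intros s Hs.
  apply (is_derive_sum (fun i s => C1 * (x i s * x i s) + y i s * y i s)).
  intros i Hi. destruct (proj2 Hsol s Hs i Hi) as [Hx Hy].
  now apply is_derive_site_energy.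
Qed.

Lemma solution_energy_right_continuous (C1 : R) :
  filterlim (E C1) (at_right 0) (locally (E C1 0)).
Proof.
  apply (filterlim_sum (fun i s => C1 * (x i s * x i s) + y i s * y i s)).
  intros i Hi. destruct (proj1 Hsol i Hi) as [_ [_ [Hx Hy]]].
  apply filterlim_Rplus; apply filterlim_Rmult; try assumption.
  - apply filterlim_const.
  - now apply filterlim_Rmult.
Qed.

Lemma solution_energy_initial (C1 : R) :
  E C1 0 = sum_n_m (fun i => C1 * (Rabs (x0 i)) ^ 2 + (Rabs (y0 i)) ^ 2) 1 n.
Proof.
  apply sum_n_m_ext_loc. intros i Hi.
  destruct (proj1 Hsol i Hi) as [Hx0 [Hy0 _]].
  rewrite Hx0, Hy0, !pow2_abs. simpl. now rewrite !Rmult_1_r.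
Qed.

Lemma solution_energy_decay (lambda beta : R) :
  (2 <= n)%nat -> 0 < a -> 0 < b -> 0 < c -> 0 < delta -> 0 < p ->
  0 < lambda -> 0 < beta ->
  (forall s, f s * s <= - lambda * s ^ 4 + beta) ->
  forall t, 0 <= t ->
  E (delta / (2 * b)) t <= exp (- delta * t) * E (delta / (2 * b)) 0
    + INR n / delta * (b / (4 * delta * lambda)
        * (delta ^ 2 / (2 * b) + delta / 2 + 2 * c ^ 2 / delta) ^ 2
        + delta * beta / b).
Proof.
  intros Hn Ha Hb Hc Hd Hp Hl Hbeta Hf t Ht.
  set (K0 := b / (4 * delta * lambda)
        * (delta ^ 2 / (2 * b) + delta / 2 + 2 * c ^ 2 / delta) ^ 2 + delta * beta / b).
  assert (HK0 : 0 <= K0).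
  { assert (0 <= (delta ^ 2 / (2 * b) + delta / 2 + 2 * c ^ 2 / delta) ^ 2)
      by apply pow2_ge_0.
    assert (0 < b / (4 * delta * lambda)) by (apply Rdiv_lt_0_compat; nra).
    assert (0 < delta * beta / b) by (apply Rdiv_lt_0_compat; nra). unfold K0. nra. }
  assert (Hgron := gronwall_linear (E (delta / (2 * b))) _ delta (INR n * K0) Hd
             (solution_energy_derive (delta / (2 * b)))
             (fun s _ => energy_rate_bound n a b c delta p lambda beta f
                           (fun j => x j s) (fun j => y j s) Hn Ha Hb Hc Hd Hp Hl Hf)
             (solution_energy_right_continuous _) t Ht).
  assert (0 < exp (- delta * t)) by apply exp_pos.
  assert (0 <= INR n * K0 / delta)
    by (apply Rdiv_le_0_compat; [apply Rmult_le_pos; [apply pos_INR|]|]; lra).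
  replace (INR n / delta * K0) with (INR n * K0 / delta) by (field; lra). nra.
Qed.

End Solution.

Theorem mainTheorem2
  (n : nat) (a b c delta p lambda beta gamma : R) (f : R -> R)
  (Hn : (4 <= n)%nat)
  (Ha : 0 < a) (Hb : 0 < b) (Hc : 0 < c) (Hdelta : 0 < delta) (Hp : 0 < p)
  (Hlambda : 0 < lambda) (Hbeta : 0 < beta) (Hgamma : 0 < gamma)
  (Hf_diff : forall s, ex_derive f s)
  (Hf_C1 : forall s, continuous (Derive f) s)
  (Hf_diss : forall s, f s * s <= - lambda * s ^ 4 + beta)
  (Hf_lip : forall s, Derive f s <= gamma)
  (x0 y0 : nat -> R) (x y : nat -> R -> R)
  (Hsol : is_FHN_solution n a b c delta p f x0 y0 x y) :
  let C1 := delta / (2 * b) in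
  let C2 := b / (4 * delta * lambda) *
            (delta ^ 2 / (2 * b) + delta / 2 + 2 * c ^ 2 / delta) ^ 2 in
  forall t, 0 <= t ->
    sum_n_m (fun i => (Rabs (x i t)) ^ 2 + (Rabs (y i t)) ^ 2) 1 n <=
    / Rmin C1 1 *
      (exp (- delta * t) *
         sum_n_m (fun i => C1 * (Rabs (x0 i)) ^ 2 + (Rabs (y0 i)) ^ 2) 1 n
       + INR n / delta * (C2 + delta * beta / b)).
Proof.
  intros C1 C2 t Ht.
  assert (HC1 : 0 < C1) by (apply Rdiv_lt_0_compat; lra).
  assert (Hmin : 0 < Rmin C1 1) by (apply Rmin_pos; lra).
  assert (Hdecay := solution_energy_decay n a b c delta p f x0 y0 x y Hsol lambda beta
                      ltac:(lia) Ha Hb Hc Hdelta Hp Hlambda Hbeta Hf_diss t Ht).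
  cbv beta zeta in Hdecay.
  rewrite (solution_energy_initial n a b c delta p f x0 y0 x y Hsol) in Hdecay.
  assert (Hdom := energy_dominates_norm n C1 (fun j => x j t) (fun j => y j t) HC1).
  apply (Rmult_le_reg_l (Rmin C1 1)); [exact Hmin|].
  rewrite <- Rmult_assoc, Rinv_r, Rmult_1_l by lra.
  fold C1 C2 in Hdecay. lra.
Qed.
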